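(* Let $S$ be a $d\times d$ symmetric positive semidefinite matrix and $L,U$ symmetric $d\times d$ matrices with entries in $\mathbb{R}\cup\{-\infty,+\infty\}$ such that $L_{ij}\le0\le U_{ij}$ for $i\ne j$ and $L_{ii}=U_{ii}=0$. Consider the problem of minimizing $-\log\det K+\operatorname{tr}(SK)+\|K\|_{LU}$ over positive definite $K$. If the optimum exists, it is the unique positive definite matrix $\widehat K$, with $\widehat\Sigma=\widehat K^{-1}$, satisfying for all $i,j\in V=\{1,\dots,d\}$: $\widehat\Sigma_{ij}-S_{ij}\in\{L_{ij}\}$ if $\widehat K_{ij}<0$; $\widehat\Sigma_{ij}-S_{ij}\in[L_{ij},U_{ij}]$ if $\widehat K_{ij}=0$; $\widehat\Sigma_{ij}-S_{ij}\in\{U_{ij}\}$ if $\widehat K_{ij}>0$.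
   Context: $\|K\|_{LU}=\sum_{i\neq j}\max\{L_{ij}K_{ij},U_{ij}K_{ij}\}$ with the convention $\pm\infty\cdot0=0$. *)

From HB Require Import structures.
From mathcomp Require Import all_boot all_order all_algebra.
From mathcomp Require Import all_classical all_reals all_analysis.
Set Implicit Arguments. Unset Strict Implicit. Unset Printing Implicit Defensive.
Import Order.TTheory GRing.Theory Num.Theory.
Local Open Scope ring_scope.

Definition symmetric_mx {T : Type} (d : nat) (A : 'M[T]_d) : Prop := A^T = A.

Definition psd_mx {R : realType} (d : nat) (A : 'M[R]_d) : Prop :=
  symmetric_mx A /\ forall v : 'rV[R]_d, 0 <= (v *m A *m v^T) 0 0.

Definition pd_mx {R : realType} (d : nat) (A : 'M[R]_d) : Prop :=
  symmetric_mx A /\ forall v : 'rV[R]_d, v != 0 -> 0 < (v *m A *m v^T) 0 0.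

(* ||K||_LU = sum_{i<>j} max(L_ij K_ij, U_ij K_ij); in \bar R the product
   (+-oo) * 0 is 0, matching the paper's convention. *)
Definition normLU {R : realType} (d : nat) (L U : 'M[\bar R]_d) (K : 'M[R]_d)
  : \bar R :=
  (\sum_(i < d) \sum_(j < d | i != j)
     Order.max (L i j * (K i j)%:E) (U i j * (K i j)%:E))%E.

Definition objLU {R : realType} (d : nat) (S : 'M[R]_d) (L U : 'M[\bar R]_d)
  (K : 'M[R]_d) : \bar R :=
  ((- ln (\det K) + \tr (S *m K))%:E + normLU L U K)%E.

Definition is_optimum {R : realType} (d : nat) (S : 'M[R]_d) (L U : 'M[\bar R]_d)
  (K : 'M[R]_d) : Prop :=
  pd_mx K /\ forall K' : 'M[R]_d, pd_mx K' -> (objLU S L U K <= objLU S L U K')%E.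

Definition kkt_LU {R : realType} (d : nat) (S : 'M[R]_d) (L U : 'M[\bar R]_d)
  (K : 'M[R]_d) : Prop :=
  forall i j : 'I_d,
    (K i j < 0 -> ((invmx K) i j - S i j)%:E = L i j) /\
    (K i j = 0 -> (L i j <= ((invmx K) i j - S i j)%:E)%E /\
                  (((invmx K) i j - S i j)%:E <= U i j)%E) /\
    (0 < K i j -> ((invmx K) i j - S i j)%:E = U i j).

From HB Require Import structures.
From mathcomp Require Import all_boot all_order all_algebra.
From mathcomp Require Import all_classical all_reals all_analysis.
From mathcomp Require Import ring lra.
Import Order.TTheory GRing.Theory Num.Theory.
Local Open Scope ring_scope.
Set Implicit Arguments. Unset Strict Implicit. Unset Printing Implicit Defensive.

(* At an optimum [K] the objective cannot decrease along the perturbations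
   [K + t (E_ij + E_ji)], which stay positive definite for small [|t|]. Along
   them [det K] is multiplied by [1 + 2 t Sigma_ij + O(t^2)] with
   [Sigma = K^-1], [tr (S K)] moves by [2 t S_ij], and the penalty moves by
   [2 t U_ij] or [2 t L_ij] according to the sign of [K_ij + t] (by [0] when
   [i = j]); comparing one-sided derivatives at [t = 0] gives the KKT
   conditions.
   Conversely, if [K] satisfies them then [G = Sigma - S] has zero diagonal,
   [||K||_LU = tr (G K)] and [||K'||_LU >= tr (G K')] for all [K'], so
   [obj K' - obj K >= ln det K - ln det K' + tr (Sigma K') - d >= 0]. With
   [P K P^T = 1] and [M = P K' P^T] the last inequality reads
   [ln det M <= tr M - d]; it follows by induction on Schur complements and
   is strict unless [M = 1], i.e. [K' = K]. *)

Lemma symmetric_mxE T n (A : 'M[T]_n) i j : symmetric_mx A -> A j i = A i j.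
Proof. by move=> sA; rewrite -{2}sA mxE. Qed.

Section PositiveDefinite.
Variable R : realType.

Lemma row_mulmx_tr_ge0 n (b : 'rV[R]_n) : 0 <= (b *m b^T) 0 0.
Proof. by rewrite mxE; apply: sumr_ge0 => k _; rewrite mxE -expr2 sqr_ge0. Qed.

Lemma row_mulmx_tr_eq0 n (b : 'rV[R]_n) : ((b *m b^T) 0 0 == 0) = (b == 0).
Proof.
apply/idP/eqP => [|->]; last by rewrite mul0mx mxE.
rewrite mxE psumr_eq0 => [/allP b0|k _]; last by rewrite mxE -expr2 sqr_ge0.
apply/rowP => k; have /implyP := b0 k (mem_index_enum k).
by rewrite mxE mulf_eq0 orbb => /(_ isT) /eqP ->; rewrite mxE.
Qed.

Lemma quad_form_delta n (v : 'rV[R]_n) i j :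
  (v *m delta_mx i j *m v^T) 0 0 = v 0 i * v 0 j.
Proof.
rewrite -(@mul_delta_mx _ n 1 n 0 i j) mulmxA -mulmxA -colE -rowE.
by rewrite !mxE big_ord1 !mxE.
Qed.

Lemma pd_mx1 n : pd_mx (1%:M : 'M[R]_n).
Proof.
split=> [|v v0]; first by rewrite /symmetric_mx trmx1.
by rewrite mulmx1 lt_def row_mulmx_tr_eq0 v0 row_mulmx_tr_ge0.
Qed.

Lemma pd_mx_congr n (M E : 'M[R]_n) :
  pd_mx M -> E \in unitmx -> pd_mx (E *m M *m E^T).
Proof.
move=> [sM pM] uE; split=> [|v v0].
  by rewrite /symmetric_mx !trmx_mul trmxK sM mulmxA.
have -> : v *m (E *m M *m E^T) *m v^T = (v *m E) *m M *m (v *m E)^T.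
  by rewrite trmx_mul !mulmxA.
apply: pM; apply: contra v0 => /eqP vE0.
by rewrite -(mulmxK uE v) vE0 mul0mx.
Qed.

Lemma quad_form_unit n (M : 'M[R]_n) i :
  (('e_i : 'rV[R]_n) *m M *m ('e_i : 'rV[R]_n)^T) 0 0 = M i i.
Proof. by rewrite trmx_delta -rowE -colE !mxE. Qed.

Lemma pd_mx_diag_gt0 n (M : 'M[R]_n) i : pd_mx M -> 0 < M i i.
Proof.
move=> [_ pM]; rewrite -quad_form_unit; apply: pM.
by apply/eqP => /matrixP /(_ 0 i) /eqP; rewrite !mxE !eqxx oner_eq0.
Qed.

Lemma pd_mx_block_dr n1 n2 (A : 'M[R]_n1) (D : 'M[R]_n2) :
  pd_mx (block_mx A 0 0 D) -> pd_mx D.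
Proof.
move=> [sM pM]; split=> [|y y0].
  by move: sM; rewrite /symmetric_mx tr_block_mx => /eq_block_mx[].
have := pM (row_mx 0 y); rewrite tr_row_mx mul_row_block mul_row_col.
rewrite !mul0mx !mulmx0 !add0r trmx0 mul0mx add0r; apply.
by rewrite -row_mx0; apply: contra y0 => /eqP /eq_row_mx[_ ->].
Qed.

Lemma pd_mx_schur n (M : 'M[R]_(1 + n)) : pd_mx M ->
  exists a b C, [/\ 0 < a, M = block_mx a%:M b b^T C &
    exists E, [/\ \det E = 1,
      E *m M *m E^T = block_mx a%:M 0 0 (C - a^-1 *: (b^T *m b)) &
      pd_mx (C - a^-1 *: (b^T *m b))]].
Proof.
move=> pdM; have [sM _] := pdM.
set a : R := M (lshift n 0) (lshift n 0); set b := ursubmx M; set C := drsubmx M.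
have a_gt0 : 0 < a by apply: pd_mx_diag_gt0.
have eqM : M = block_mx a%:M b b^T C.
  rewrite -{1}[M]submxK [ulsubmx M]mx11_scalar !mxE.
  by rewrite /b trmx_ursub sM.
exists a, b, C; split=> //.
pose E : 'M[R]_(1 + n) := block_mx 1%:M 0 (- a^-1 *: b^T) 1%:M.
have detE : \det E = 1 by rewrite det_lblock !det1 mulr1.
have EME : E *m M *m E^T = block_mx a%:M 0 0 (C - a^-1 *: (b^T *m b)).
  rewrite eqM tr_block_mx !mulmx_block !trmx0 !tr_scalar_mx.
  rewrite ?mul1mx ?mul0mx ?mulmx1 ?mulmx0 ?addr0 ?add0r.
  rewrite mul_mx_scalar mul_scalar_mx linearZ /= trmxK !scalerA.
  have -> : a * - a^-1 = -1 by rewrite mulrN divff // gt_eqF.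
  rewrite !scaleN1r.
  by rewrite (addNr b) (addNr b^T) mul0mx add0r -scalemxAl scaleNr addrC.
exists E; split=> //; apply: (@pd_mx_block_dr 1 _ a%:M); rewrite -EME.
by apply: pd_mx_congr; rewrite // unitmxE detE unitr1.
Qed.

Lemma pd_mx_congr1 n (M : 'M[R]_n) : pd_mx M ->
  exists2 P, P \in unitmx & P *m M *m P^T = 1%:M.
Proof.
elim: n M => [|n IH] M pdM.
  by exists 1%:M; [rewrite unitmx1 | apply/matrixP => -[]].
move: M pdM; change n.+1 with (1 + n)%N => M pdM.
have [a [b [C [a_gt0 _ [E [detE EME pdC]]]]]] := pd_mx_schur pdM.
have [P uP PCP] := IH _ pdC.
set s := Num.sqrt a; have s_gt0 : 0 < s by rewrite sqrtr_gt0.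
pose F : 'M[R]_(1 + n) := block_mx (s^-1)%:M 0 0 P.
exists (F *m E).
  rewrite unitmx_mul [E \in _]unitmxE detE unitr1 andbT unitmxE det_ublock.
  by rewrite det_scalar1 unitrM -unitmxE uP andbT unitfE invr_eq0 gt_eqF.
have -> : F *m E *m M *m (F *m E)^T = F *m (E *m M *m E^T) *m F^T.
  by rewrite trmx_mul !mulmxA.
rewrite EME tr_block_mx !mulmx_block !trmx0 !tr_scalar_mx.
rewrite ?mul1mx ?mul0mx ?mulmx1 ?mulmx0 ?addr0 ?add0r PCP -!scalar_mxM.
have -> : s^-1 * a * s^-1 = 1.
  by rewrite -[a](@sqr_sqrtr _ a) ?ltW // -/s; field; rewrite gt_eqF.
by rewrite !mul0mx [RHS]scalar_mx_block.
Qed.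

Lemma pd_mx_det_gt0 n (M : 'M[R]_n) : pd_mx M -> 0 < \det M.
Proof.
move=> /pd_mx_congr1[P _ /(congr1 determinant)].
rewrite !det_mulmx det_tr det1 mulrAC -expr2 => detPMP.
rewrite ltNge; apply/negP => detM_le0.
have : \det P ^+ 2 * \det M <= 0 by rewrite mulr_ge0_le0 ?sqr_ge0.
by rewrite detPMP ler10.
Qed.

Lemma pd_mx_unit n (M : 'M[R]_n) : pd_mx M -> M \in unitmx.
Proof. by move=> /pd_mx_det_gt0 detM_gt0; rewrite unitmxE unitfE gt_eqF. Qed.

Lemma pd_mx_inv n (M : 'M[R]_n) : pd_mx M -> pd_mx (invmx M).
Proof.
move=> pdM; have uM := pd_mx_unit pdM.
have := pd_mx_congr pdM (_ : invmx M \in unitmx); rewrite unitmx_inv => /(_ uM).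
by rewrite mulVmx // mul1mx trmx_inv pdM.1.
Qed.

Lemma ln_leif (x : R) : 0 < x -> ln x <= x - 1 ?= iff (x == 1).
Proof.
move=> x_gt0; split.
  by have := @le_ln1Dx R (x - 1); rewrite subrKC; apply; lra.
apply/eqP/eqP => [lnx|->]; last by rewrite ln1 subrr.
apply/eqP; rewrite -subr_eq0; apply: contraT => /expR_gt1Dx.
by rewrite subrKC -lnx lnK ?posrE // ltxx.
Qed.

(* Schur complement: [ln det M = ln a + ln det C'] and
   [tr M - (1 + n) = (a - 1) + (tr C' - n) + |b|^2 / a]. *)
Lemma ln_det_leif n (M : 'M[R]_n) :
  pd_mx M -> ln (\det M) <= \tr M - n%:R ?= iff (M == 1%:M).
Proof.
elim: n M => [|n IH] M pdM.
  rewrite det_mx00 ln1 /mxtrace big_ord0 subrr.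
  by apply/leif_refl/eqP/matrixP => -[].
move: M pdM; change n.+1 with (1 + n)%N => M pdM.
have [a [b [C [a_gt0 eqM [E [detE EME pdC]]]]]] := pd_mx_schur pdM.
set C' := C - _ in EME pdC; set beta := (b *m b^T) 0 0.
have detM : \det M = a * \det C'.
  have := congr1 determinant EME.
  by rewrite !det_mulmx det_tr detE mul1r mulr1 det_ublock det_scalar1.
have trM : \tr M - (1 + n)%:R = (a - 1) + (\tr C' - n%:R) + a^-1 * beta.
  rewrite eqM mxtrace_block mxtrace_scalar /C' raddfB /= mxtraceZ mxtrace_mulC.
  rewrite [b *m b^T]mx11_scalar mxtrace_scalar natrD !mulr1n -/beta; ring.
have eqM1 : (M == 1%:M) = (a == 1) && (C' == 1%:M) && (0 == a^-1 * beta).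
  rewrite [0 == _]eq_sym mulf_eq0 invr_eq0 (gt_eqF a_gt0) /beta.
  rewrite row_mulmx_tr_eq0 -andbA.
  rewrite eqM (scalar_mx_block 1 n 1).
  apply/eqP/and3P => [/eq_block_mx[a1 b0 _ C1] | [/eqP a1 /eqP C'1 /eqP b0]].
    move/matrixP: a1 => /(_ 0 0); rewrite !mxE /= !mulr1n => ->.
    by rewrite /C' b0 C1 trmx0 mul0mx scaler0 subr0 !eqxx.
  move: C'1; rewrite /C' b0 trmx0 mul0mx scaler0 subr0 => ->.
  by rewrite a1.
rewrite detM lnM ?posrE ?pd_mx_det_gt0 // trM eqM1 -[ln a + _]addr0.
apply: leifD; first by apply: leifD; [exact: ln_leif | exact: IH].
by apply: leif_eq; rewrite mulr_ge0 ?row_mulmx_tr_ge0 // invr_ge0 ltW.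
Qed.

Lemma ln_det_ratio_leif n (K K' : 'M[R]_n) : pd_mx K -> pd_mx K' ->
  ln (\det K') - ln (\det K) <= \tr (invmx K *m K') - n%:R ?= iff (K' == K).
Proof.
move=> pdK pdK'; have [P uP PKP] := pd_mx_congr1 pdK.
set M := P *m K' *m P^T.
have detPKP : \det P ^+ 2 * \det K = 1.
  by have := congr1 determinant PKP; rewrite !det_mulmx det_tr det1 mulrAC -expr2.
have detK_gt0 := pd_mx_det_gt0 pdK; have detK'_gt0 := pd_mx_det_gt0 pdK'.
have lnM : ln (\det M) = ln (\det K') - ln (\det K).
  rewrite -ln_div ?posrE //; congr ln; apply: (mulIf (lt0r_neq0 detK_gt0)).
  by rewrite divfK ?gt_eqF // /M !det_mulmx det_tr -[RHS]mulr1 -detPKP; ring.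
have trM : \tr (invmx K *m K') = \tr M.
  have -> : invmx K = P^T *m P.
    have PPK : P^T *m P *m K = 1%:M by rewrite -mulmxA; apply: mulmx1C.
    by rewrite -[invmx K]mul1mx -PPK mulmxK ?pd_mx_unit.
  by rewrite -mulmxA mxtrace_mulC.
have eqM1 : (M == 1%:M) = (K' == K).
  have canc X : invmx P *m (P *m X *m P^T) *m invmx P^T = X.
    by rewrite mulmxA mulmxK ?unitmx_tr // mulKmx.
  by rewrite -PKP /M; apply/eqP/eqP => [eqM | ->] //; rewrite -(canc K') eqM canc.
by rewrite -lnM trM -eqM1; apply: ln_det_leif; apply: pd_mx_congr.
Qed.

Lemma pd_mx_quad_form_ge0 n (K : 'M[R]_n) (v : 'rV[R]_n) :
  pd_mx K -> 0 <= (v *m K *m v^T) 0 0.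
Proof.
move=> [_ pK]; have [->|v0] := eqVneq v 0; last exact/ltW/pK.
by rewrite !mul0mx mxE.
Qed.

Lemma quad_form_subZ n (K : 'M[R]_n) (v u : 'rV[R]_n) s : symmetric_mx K ->
  ((v - s *: u) *m K *m (v - s *: u)^T) 0 0 =
  (v *m K *m v^T) 0 0 - 2 * s * (u *m K *m v^T) 0 0
    + s ^+ 2 * (u *m K *m u^T) 0 0.
Proof.
move=> sK; rewrite -!trace_mx11 mulmxBl [(_ - _)^T]linearB /= [(_ *: _)^T]linearZ.
rewrite /= !(mulmxBl, mulmxBr) -!scalemxAl -!scalemxAr !raddfB /= !mxtraceZ.
have -> : \tr (v *m K *m u^T) = \tr (u *m K *m v^T).
  by rewrite -mxtrace_tr !trmx_mul trmxK sK mulmxA.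
by rewrite expr2; ring.
Qed.

Lemma pd_mx_cauchy_schwarz n (K : 'M[R]_n) (u v : 'rV[R]_n) : pd_mx K ->
  (u *m v^T) 0 0 ^+ 2 <= (v *m K *m v^T) 0 0 * (u *m invmx K *m u^T) 0 0.
Proof.
move=> pdK; have uK := pd_mx_unit pdK; have [sK _] := pdK.
have [->|u0] := eqVneq u 0; first by rewrite !mul0mx mxE expr0n mulr0.
set x := (u *m v^T) 0 0; set q := (v *m K *m v^T) 0 0.
set sigma := (u *m invmx K *m u^T) 0 0.
have sigma_gt0 : 0 < sigma by apply: (pd_mx_inv pdK).2.
have := pd_mx_quad_form_ge0 (v - (x / sigma) *: (u *m invmx K)) pdK.
rewrite quad_form_subZ // mulmxKV // trmx_mul trmx_inv sK mulmxA -/q -/x -/sigma.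
have -> : q - 2 * (x / sigma) * x + (x / sigma) ^+ 2 * sigma = q - x ^+ 2 / sigma.
  by field; rewrite gt_eqF.
by rewrite subr_ge0 ler_pdivrMr.
Qed.

End PositiveDefinite.

Definition sym_delta_mx {R : pzSemiRingType} n (i j : 'I_n) : 'M[R]_n :=
  delta_mx i j + delta_mx j i.

Section MatrixIdentities.
Variable R : comPzRingType.

Definition row_set n (A : 'M[R]_n) r (w : 'rV[R]_n) : 'M[R]_n :=
  \matrix_(k, l) if k == r then w 0 l else A k l.

Lemma det_add_row n (A : 'M[R]_n) r (w : 'rV[R]_n) t :
  \det (A + t *: (delta_mx r 0 *m w)) = \det A + t * \det (row_set A r w).
Proof.
rewrite -[\det A]mul1r; apply: (@determinant_multilinear _ _ _ _ _ r).
- by apply/rowP => l; rewrite !mxE big_ord1 !mxE !eqxx !mul1r.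
- by apply/matrixP => k l; rewrite !mxE big_ord1 !mxE lift_eqF mul0r mulr0 addr0.
- by apply/matrixP => k l; rewrite !mxE big_ord1 !mxE lift_eqF mul0r mulr0 addr0.
Qed.

Lemma det_row_set_delta n (A : 'M[R]_n) r c :
  \det (row_set A r 'e_c) = cofactor A r c.
Proof.
rewrite (expand_det_row _ r) (bigD1 c) //= big1 => [|l /negbTE lc].
  rewrite !mxE !eqxx mul1r addr0 /cofactor; congr (_ * \det _).
  by apply/matrixP => k l; rewrite !mxE lift_eqF.
by rewrite !mxE eqxx lc mul0r.
Qed.

Lemma det_add_sym_delta n (A : 'M[R]_n) i j : exists c, forall t,
  \det (A + t *: sym_delta_mx i j) =
  \det A + (cofactor A i j + cofactor A j i) * t + c * t ^+ 2.
Proof.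
rewrite /sym_delta_mx -!(@mul_delta_mx _ n 1 n 0).
have [<-|ij] := eqVneq i j.
  exists 0 => t; rewrite scalerDr -scalerDl det_add_row det_row_set_delta; ring.
exists (\det (row_set (row_set A j 'e_i) i 'e_j)) => t.
rewrite scalerDr addrA det_add_row det_add_row det_row_set_delta.
have -> : row_set (A + t *: ((delta_mx i 0 : 'cV_n) *m 'e_j)) j 'e_i
          = row_set A j 'e_i + t *: ((delta_mx i 0 : 'cV_n) *m 'e_j).
  apply/matrixP => k l; rewrite !mxE big_ord1 !mxE.
  by case: eqVneq => [->|]; rewrite // [j == i]eq_sym (negbTE ij) mul0r mulr0 addr0.
rewrite det_add_row det_row_set_delta; ring.
Qed.

Lemma mxtrace_mul_sym_delta n (A : 'M[R]_n) i j :
  \tr (A *m sym_delta_mx i j) = A j i + A i j.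
Proof.
have tr_delta k l : \tr (A *m delta_mx k l) = A l k.
  rewrite -(@mul_delta_mx _ n 1 n 0) mulmxA -colE mxtrace_mulC -rowE.
  by rewrite /mxtrace big_ord1 !mxE.
by rewrite mulmxDr mxtraceD !tr_delta.
Qed.

Lemma mxtrace_mul_offdiag d (G X : 'M[R]_d) :
  symmetric_mx X -> (forall i, G i i = 0) ->
  \tr (G *m X) = \sum_i \sum_(j | i != j) X i j * G i j.
Proof.
move=> sX G0; apply: eq_bigr => i _; rewrite mxE (bigD1 i) //= G0 mul0r add0r.
by apply: eq_big => [j|j _]; rewrite 1?eq_sym // mulrC (symmetric_mxE _ _ sX).
Qed.

End MatrixIdentities.

Section Perturbation.
Variable R : realType.

Lemma cofactor_invmx n (K : 'M[R]_n) i j :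
  K \in unitmx -> cofactor K i j = \det K * invmx K j i.
Proof.
move=> uK; rewrite /invmx uK !mxE mulrA divff ?mul1r //.
by rewrite -unitfE -unitmxE.
Qed.

Lemma pd_mx_add_sym_delta n (K : 'M[R]_n) i j t : pd_mx K ->
  `|t| * (invmx K i i + invmx K j j) < 1 -> pd_mx (K + t *: sym_delta_mx i j).
Proof.
move=> pdK ht; split=> [|v v0].
  rewrite /symmetric_mx linearD linearZ /= linearD /= !trmx_delta pdK.1.
  by rewrite [delta_mx j i + _]addrC.
have bound k : v 0 k ^+ 2 <= (v *m K *m v^T) 0 0 * invmx K k k.
  have := pd_mx_cauchy_schwarz 'e_k v pdK; rewrite quad_form_unit.
  by have -> : (('e_k : 'rV[R]_n) *m v^T) 0 0 = v 0 k by rewrite -rowE !mxE.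
have := bound i; have := bound j; have := pdK.2 v v0.
rewrite -!trace_mx11 /sym_delta_mx mulmxDr mulmxDl -scalemxAr -scalemxAl.
rewrite mulmxDr mulmxDl mxtraceD mxtraceZ mxtraceD !trace_mx11 !quad_form_delta.
set q := (v *m K *m v^T) 0 0; set x := v 0 i; set y := v 0 j.
move: ht; set si := invmx K i i; set sj := invmx K j j.
(* [2 |x y| <= x^2 + y^2 <= q (si + sj)] *)
have := sqr_ge0 (x + y); have := sqr_ge0 (x - y).
by case: (lerP 0 t) => t0; [rewrite ger0_norm | rewrite ltr0_norm] => //; nra.
Qed.

Lemma le0_of_le_mul_small (x C e : R) : 0 < e ->
  (forall t, 0 < t < e -> x <= t * C) -> x <= 0.
Proof.
move=> e_gt0 h; apply/ler_addgt0Pr => eps eps_gt0; rewrite add0r.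
have C1_gt0 : 0 < `|C| + 1 by have := normr_ge0 C; lra.
pose t := Order.min (e / 2) (eps / (`|C| + 1)).
have t_gt0 : 0 < t by rewrite lt_min !divr_gt0.
have t_lt_e : t < e.
  by apply: le_lt_trans (_ : t <= e / 2) _; rewrite ?ge_min ?lexx //; lra.
have t_eps : t * (`|C| + 1) <= eps by rewrite -ler_pdivlMr // ge_min lexx orbT.
apply: le_trans (h t _) _; first by rewrite t_gt0.
by apply: le_trans t_eps; rewrite ler_wpM2l ?ltW //; have := ler_norm C; lra.
Qed.

(* [ln y >= 1 - 1/y] turns the hypothesis into [a - b <= O(t)]. *)
Lemma le_of_ln_le_small (a b c e : R) : 0 < e ->
  (forall t, 0 < t < e -> 0 < 1 + a * t + c * t ^+ 2 /\
                          ln (1 + a * t + c * t ^+ 2) <= b * t) -> a <= b.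
Proof.
move=> e_gt0 h; rewrite -subr_le0.
apply: (@le0_of_le_mul_small _ (`|a * b - c| + `|b * c|) (Order.min e 1)).
  by rewrite lt_min e_gt0 ltr01.
move=> t /andP[t_gt0]; rewrite lt_min => /andP[t_lt_e t_lt1].
have /h[y_gt0 ln_le] : 0 < t < e by rewrite t_gt0.
set y := 1 + a * t + c * t ^+ 2 in y_gt0 ln_le.
have inv_le : 1 - y^-1 <= b * t.
  have := (ln_leif (_ : 0 < y^-1)).1; rewrite lnV ?posrE ?invr_gt0 //; lra.
have := ler_wpM2r (ltW y_gt0) inv_le.
rewrite mulrBl mulVf ?gt_eqF // mul1r /y => h2.
have : t * (a - b) <= t * (t * (a * b - c) + t ^+ 2 * (b * c)) by nra.
rewrite ler_pM2l // => /le_trans; apply.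
rewrite [X in _ <= X]mulrDr; apply: lerD; first by rewrite ler_wpM2l ?ler_norm // ltW.
rewrite expr2 -mulrA ler_pM2l //; apply: le_trans (ler_norm _) _.
by rewrite normrM gtr0_norm // ler_piMl // ltW.
Qed.

End Perturbation.

Section Penalty.
Variable R : realType.

Definition penaltyLU (l u : \bar R) (x : R) : \bar R :=
  Order.max (l * x%:E)%E (u * x%:E)%E.

Lemma penaltyLU_ge0 l u x : (l <= 0)%E -> (0 <= u)%E -> (0 <= penaltyLU l u x)%E.
Proof.
move=> l_le0 u_ge0; rewrite /penaltyLU le_max; case: (lerP 0 x) => x0.
  by apply/orP; right; apply: mule_ge0; rewrite // lee_fin.
by apply/orP; left; apply: mule_le0 => //; rewrite lee_fin ltW.
Qed.

Lemma penaltyLU0 l u : penaltyLU l u 0 = 0%E.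
Proof. by rewrite /penaltyLU !mule0 maxxx. Qed.

Lemma ger0_penaltyLU l u x : (l <= 0)%E -> 0 <= u -> 0 <= x ->
  penaltyLU l u%:E x = (x * u)%:E.
Proof.
move=> l_le0 u_ge0 x_ge0; rewrite /penaltyLU max_r; first by rewrite -EFinM mulrC.
apply: (@le_trans _ _ 0%E); first by apply: mule_le0_ge0; rewrite // lee_fin.
by apply: mule_ge0; rewrite lee_fin.
Qed.

Lemma ler0_penaltyLU l u x : l <= 0 -> (0 <= u)%E -> x <= 0 ->
  penaltyLU l%:E u x = (x * l)%:E.
Proof.
move=> l_le0 u_ge0 x_le0; rewrite /penaltyLU max_l; first by rewrite -EFinM mulrC.
apply: (@le_trans _ _ 0%E); first by apply: mule_ge0_le0; rewrite // lee_fin.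
by apply: mule_le0; rewrite lee_fin.
Qed.

Lemma penaltyLU_pinfty l x : 0 < x -> penaltyLU l +oo x = +oo%E.
Proof. by move=> x_gt0; rewrite /penaltyLU mulyr gtr0_sg // mul1e max_r ?leey. Qed.

Lemma penaltyLU_ninfty u x : x < 0 -> penaltyLU -oo u x = +oo%E.
Proof.
by move=> x_lt0; rewrite /penaltyLU mulNyr ltr0_sg // EFinN mulN1e max_l ?leey.
Qed.

Lemma penaltyLU_ge_mul l u g x : (l <= g%:E)%E -> (g%:E <= u)%E ->
  ((x * g)%:E <= penaltyLU l u x)%E.
Proof.
move=> lg gu; rewrite /penaltyLU le_max; case: (lerP 0 x) => x0.
  by apply/orP; right; rewrite EFinM muleC; apply: lee_wpmul2r; rewrite ?lee_fin.
apply/orP; left; case: l lg => [l||] //= lg.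
  by rewrite -EFinM lee_fin; rewrite lee_fin in lg; nra.
by rewrite mulNyr ltr0_sg // EFinN mulN1e leey.
Qed.

End Penalty.

Section NormLU.
Variables (R : realType) (d : nat) (L U : 'M[\bar R]_d).

Lemma normLU_ge0 (K : 'M[R]_d) :
  (forall i j, i != j -> (L i j <= 0)%E /\ (0 <= U i j)%E) ->
  (0 <= normLU L U K)%E.
Proof.
move=> hLU; apply: sume_ge0 => i _; apply: sume_ge0 => j ij.
by have [] := hLU i j ij; apply: penaltyLU_ge0.
Qed.

Lemma normLU_split (K : 'M[R]_d) i j : i != j ->
  normLU L U K = (penaltyLU (L i j) (U i j) (K i j)
    + penaltyLU (L j i) (U j i) (K j i)
    + \sum_(p : 'I_d * 'I_d | (p.1 != p.2) && (p != (i, j)) && (p != (j, i)))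
        penaltyLU (L p.1 p.2) (U p.1 p.2) (K p.1 p.2))%E.
Proof.
move=> ij; rewrite /normLU pair_big_dep /= (bigD1 (i, j)) ?ij //= -addeA.
by rewrite (bigD1 (j, i)) //= eq_sym ij xpair_eqE negb_and eq_sym ij.
Qed.

Lemma normLU_add_sym_delta_diag (K : 'M[R]_d) i t :
  normLU L U (K + t *: sym_delta_mx i i) = normLU L U K.
Proof.
apply: eq_bigr => k _; apply: eq_bigr => l kl; rewrite !mxE.
have -> : (k == i) && (l == i) = false.
  by apply: contraNF kl => /andP[/eqP-> /eqP->].
by rewrite addr0 mulr0 addr0.
Qed.

Lemma normLU_add_sym_delta (K : 'M[R]_d) i j t beta : i != j ->
  symmetric_mx L -> symmetric_mx U -> symmetric_mx K ->
  penaltyLU (L i j) (U i j) (K i j) = (K i j * beta)%:E ->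
  penaltyLU (L i j) (U i j) (K i j + t) = ((K i j + t) * beta)%:E ->
  normLU L U (K + t *: sym_delta_mx i j) = (normLU L U K + (2 * beta * t)%:E)%E.
Proof.
move=> ij sL sU sK pen0 pent; rewrite !(normLU_split _ ij).
have -> : (K + t *: sym_delta_mx i j) i j = K i j + t.
  by rewrite !mxE !eqxx (negbTE ij) /= addr0 mulr1.
have -> : (K + t *: sym_delta_mx i j) j i = K i j + t.
  rewrite !mxE !eqxx [j == i]eq_sym (negbTE ij) /= add0r mulr1.
  by rewrite (symmetric_mxE i j sK).
rewrite (symmetric_mxE i j sK) (symmetric_mxE i j sL) (symmetric_mxE i j sU).
rewrite pen0 pent; under eq_bigr => p /andP[/andP[_ p_ij] p_ji].
  rewrite !mxE; move: p_ij p_ji; rewrite -!pair_eqE /= => /negbTE-> /negbTE->.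
  by rewrite /= addr0 mulr0 addr0; over.
by rewrite -!EFinD addeAC -EFinD; congr (_%:E + _)%E; ring.
Qed.

Lemma normLU_tr (K G : 'M[R]_d) : symmetric_mx K -> (forall i, G i i = 0) ->
  (forall i j, i != j -> penaltyLU (L i j) (U i j) (K i j) = (K i j * G i j)%:E) ->
  normLU L U K = (\tr (G *m K))%:E.
Proof.
move=> sK G0 pen; rewrite (mxtrace_mul_offdiag sK G0) -sumEFin; apply: eq_bigr => i _.
by rewrite -sumEFin; apply: eq_bigr => j; apply: pen.
Qed.

Lemma normLU_ge_tr (K G : 'M[R]_d) : symmetric_mx K -> (forall i, G i i = 0) ->
  (forall i j, i != j -> (L i j <= (G i j)%:E)%E /\ ((G i j)%:E <= U i j)%E) ->
  ((\tr (G *m K))%:E <= normLU L U K)%E.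
Proof.
move=> sK G0 hG; rewrite (mxtrace_mul_offdiag sK G0) -sumEFin; apply: lee_sum => i _.
by rewrite -sumEFin; apply: lee_sum => j /hG[]; apply: penaltyLU_ge_mul.
Qed.

End NormLU.

Section Optimality.
Variables (R : realType) (d : nat) (S : 'M[R]_d) (L U : 'M[\bar R]_d).
Hypotheses (sS : symmetric_mx S) (sL : symmetric_mx L) (sU : symmetric_mx U).
Hypothesis hLU : forall i j, i != j -> (L i j <= 0)%E /\ (0 <= U i j)%E.
Hypothesis hLU_diag : forall i, L i i = 0%E /\ U i i = 0%E.

Lemma optimum_normLU_fin K : is_optimum S L U K -> normLU L U K \is a fin_num.
Proof.
move=> [_ minK]; have := minK _ (pd_mx1 R d); rewrite /objLU.
have -> : normLU L U 1%:M = 0%E.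
  apply: big1 => i _; apply: big1 => j /negbTE ij.
  by rewrite mxE ij; exact: penaltyLU0.
rewrite adde0 => objK_le; rewrite ge0_fin_numE ?normLU_ge0 // ltey.
by apply: contraTneq objK_le => ->; rewrite addey // leye_eq.
Qed.

Lemma optimum_penaltyLU_fin K i j : i != j -> is_optimum S L U K ->
  penaltyLU (L i j) (U i j) (K i j) \is a fin_num.
Proof.
move=> ij /optimum_normLU_fin.
by rewrite (normLU_split _ _ _ ij) !fin_numD => /andP[/andP[]].
Qed.

(* [a], [tr (S H)] and [p] are the right derivatives at [t = 0] of
   [det (K + t H) / det K], of [tr (S (K + t H))] and of the penalty. *)
Lemma optimum_first_order K H a c p e : is_optimum S L U K -> 0 < e ->
  (forall t, 0 < t < e -> pd_mx (K + t *: H)) ->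
  (forall t, \det (K + t *: H) = \det K * (1 + a * t + c * t ^+ 2)) ->
  (forall t, 0 < t < e ->
     normLU L U (K + t *: H) = (normLU L U K + (p * t)%:E)%E) ->
  a <= \tr (S *m H) + p.
Proof.
move=> optK e_gt0 pdKH detKH normKH; have [pdK minK] := optK.
have detK_gt0 := pd_mx_det_gt0 pdK.
have [N normK] : exists N, normLU L U K = N%:E.
  by exists (fine (normLU L U K)); rewrite fineK ?optimum_normLU_fin.
apply: (le_of_ln_le_small (c := c) e_gt0) => t t_range.
have y_gt0 : 0 < 1 + a * t + c * t ^+ 2.
  by have := pd_mx_det_gt0 (pdKH t t_range); rewrite detKH pmulr_rgt0.
split=> //; have := minK _ (pdKH t t_range).
rewrite /objLU (normKH _ t_range) normK detKH lnM ?posrE //.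
rewrite mulmxDr mxtraceD -scalemxAr mxtraceZ -!EFinD lee_fin; lra.
Qed.

Lemma optimum_sym_delta K i j sg beta e : is_optimum S L U K ->
  `|sg| = 1 -> 0 < e ->
  (forall t, 0 < t < e -> normLU L U (K + (sg * t) *: sym_delta_mx i j)
                          = (normLU L U K + (2 * sg * beta * t)%:E)%E) ->
  sg * (invmx K i j - S i j) <= sg * beta.
Proof.
move=> optK sg1 e_gt0 normKt; have pdK := optK.1.
have detK_neq0 := lt0r_neq0 (pd_mx_det_gt0 pdK).
have sSigma := trmx_inv K; rewrite pdK.1 in sSigma.
set m := invmx K i i + invmx K j j.
have m_gt0 : 0 < m by apply: addr_gt0; apply/pd_mx_diag_gt0/pd_mx_inv.
have [c detKt] := det_add_sym_delta K i j.
have scaleE t : K + t *: (sg *: sym_delta_mx i j) = K + (sg * t) *: sym_delta_mx i j.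
  by rewrite scalerA mulrC.
suff : sg * (2 * invmx K i j) <= \tr (S *m (sg *: sym_delta_mx i j)) + 2 * sg * beta.
  rewrite -scalemxAr mxtraceZ mxtrace_mul_sym_delta (symmetric_mxE i j sS); lra.
apply: (@optimum_first_order K _ _ (c * sg ^+ 2 / \det K) _ (Order.min e m^-1)) => //.
- by rewrite lt_min e_gt0 invr_gt0.
- move=> t /andP[t_gt0]; rewrite lt_min => /andP[_ t_lt]; rewrite scaleE.
  apply: pd_mx_add_sym_delta => //.
  by rewrite normrM sg1 mul1r gtr0_norm // -/m -ltr_pdivlMr // mul1r.
- move=> t; rewrite scaleE detKt !cofactor_invmx ?pd_mx_unit //.
  by rewrite (symmetric_mxE i j sSigma); field.
- move=> t /andP[t_gt0]; rewrite lt_min => /andP[t_lt _].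
  by rewrite scaleE normKt ?t_gt0.
Qed.

Lemma optimum_diag K i : is_optimum S L U K -> invmx K i i = S i i.
Proof.
move=> optK.
have slope sg : `|sg| = 1 -> sg * (invmx K i i - S i i) <= sg * 0.
  move=> sg1; apply: (optimum_sym_delta optK sg1 ltr01) => t _.
  by rewrite normLU_add_sym_delta_diag mulr0 mul0r adde0.
have := slope 1 (normr1 R); have := slope (-1) (normrN1 R); lra.
Qed.

Lemma optimum_offdiag_slope K i j sg beta e : i != j -> is_optimum S L U K ->
  `|sg| = 1 -> 0 < e ->
  (forall t, 0 <= t < e -> penaltyLU (L i j) (U i j) (K i j + sg * t)
                           = ((K i j + sg * t) * beta)%:E) ->
  sg * (invmx K i j - S i j) <= sg * beta.
Proof.
move=> ij optK sg1 e_gt0 pen; apply: (optimum_sym_delta optK sg1 e_gt0).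
move=> t /andP[t_gt0 t_lt_e].
rewrite (normLU_add_sym_delta (beta := beta) ij sL sU optK.1.1).
- by congr (_ + _%:E)%E; ring.
- by have := pen 0; rewrite mulr0 addr0 lexx e_gt0; apply.
- by apply: pen; rewrite ltW.
Qed.

Lemma optimum_offdiag_U K i j : i != j -> is_optimum S L U K -> 0 <= K i j ->
  ((invmx K i j - S i j)%:E <= U i j)%E /\
  (0 < K i j -> (invmx K i j - S i j)%:E = U i j).
Proof.
move=> ij optK K_ge0; have [L_le0 U_ge0] := hLU ij.
case Uij: (U i j) U_ge0 => [u||] // U_ge0; last first.
  split=> [|K_gt0]; first exact: leey.
  by have := optimum_penaltyLU_fin ij optK; rewrite Uij penaltyLU_pinfty.
have pen x : 0 <= x -> penaltyLU (L i j) (U i j) x = (x * u)%:E.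
  by move=> x_ge0; rewrite Uij ger0_penaltyLU // -lee_fin.
have le_u : invmx K i j - S i j <= u.
  have := @optimum_offdiag_slope K i j 1 u 1 ij optK (normr1 R) ltr01.
  by rewrite !mul1r; apply => t /andP[t_ge0 _]; rewrite pen ?mul1r ?addr_ge0.
rewrite lee_fin le_u; split=> // K_gt0; congr EFin; apply/eqP.
rewrite eq_le le_u /=.
have := @optimum_offdiag_slope K i j (-1) u (K i j) ij optK (normrN1 R) K_gt0.
by rewrite !mulN1r lerN2; apply=> t /andP[_ t_lt]; rewrite pen // mulN1r subr_ge0 ltW.
Qed.

Lemma optimum_offdiag_L K i j : i != j -> is_optimum S L U K -> K i j <= 0 ->
  (L i j <= (invmx K i j - S i j)%:E)%E /\
  (K i j < 0 -> (invmx K i j - S i j)%:E = L i j).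
Proof.
move=> ij optK K_le0; have [L_le0 U_ge0] := hLU ij.
case Lij: (L i j) L_le0 => [l||] // L_le0; last first.
  split=> [|K_lt0]; first exact: leNye.
  by have := optimum_penaltyLU_fin ij optK; rewrite Lij penaltyLU_ninfty.
have pen x : x <= 0 -> penaltyLU (L i j) (U i j) x = (x * l)%:E.
  by move=> x_le0; rewrite Lij ler0_penaltyLU // -lee_fin.
have ge_l : l <= invmx K i j - S i j.
  have := @optimum_offdiag_slope K i j (-1) l 1 ij optK (normrN1 R) ltr01.
  rewrite !mulN1r lerN2; apply=> t /andP[t_ge0 _].
  by rewrite pen // mulN1r subr_le0 (le_trans K_le0).
rewrite lee_fin ge_l; split=> // K_lt0; congr EFin; apply/eqP.
rewrite eq_le ge_l andbT.
have := @optimum_offdiag_slope K i j 1 l (- K i j) ij optK (normr1 R).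
rewrite !mul1r oppr_gt0; apply=> // t /andP[_ t_lt]; rewrite pen //; lra.
Qed.

Lemma optimum_kkt K : is_optimum S L U K -> kkt_LU S L U K.
Proof.
move=> optK i j; have [<-|ij] := eqVneq i j.
  by rewrite optimum_diag // subrr; have [-> ->] := hLU_diag i.
split=> [K_lt0|]; first exact: (optimum_offdiag_L ij optK (ltW K_lt0)).2.
split=> [K0|K_gt0]; last exact: (optimum_offdiag_U ij optK (ltW K_gt0)).2.
have K_le0 : K i j <= 0 by rewrite K0.
have K_ge0 : 0 <= K i j by rewrite K0.
split; first exact: (optimum_offdiag_L ij optK K_le0).1.
exact: (optimum_offdiag_U ij optK K_ge0).1.
Qed.

Lemma kkt_diag K i : pd_mx K -> kkt_LU S L U K -> invmx K i i = S i i.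
Proof.
move=> pdK kktK; have := (kktK i i).2.2 (pd_mx_diag_gt0 i pdK).
by rewrite (hLU_diag i).2 => /eqP; rewrite eqe subr_eq0 => /eqP.
Qed.

Lemma kkt_offdiag K i j : i != j -> kkt_LU S L U K ->
  [/\ (L i j <= (invmx K i j - S i j)%:E)%E, ((invmx K i j - S i j)%:E <= U i j)%E
    & penaltyLU (L i j) (U i j) (K i j) = (K i j * (invmx K i j - S i j))%:E].
Proof.
move=> ij kktK; have [L_le0 U_ge0] := hLU ij.
have [kkt_lt [kkt_eq kkt_gt]] := kktK i j.
set g := invmx K i j - S i j in kkt_lt kkt_eq kkt_gt *.
case: (ltgtP (K i j) 0) => K0.
- have gL := kkt_lt K0; have g_le0 : g <= 0 by rewrite -lee_fin gL.
  rewrite -gL ler0_penaltyLU //; last exact: ltW.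
  by split=> //; apply: le_trans U_ge0; rewrite lee_fin.
- have gU := kkt_gt K0; have g_ge0 : 0 <= g by rewrite -lee_fin gU.
  rewrite -gU ger0_penaltyLU //; last exact: ltW.
  by split=> //; apply: le_trans L_le0 _; rewrite lee_fin.
- by have [gL gU] := kkt_eq K0; rewrite K0 penaltyLU0 mul0r.
Qed.

Lemma kkt_normLU K : pd_mx K -> kkt_LU S L U K ->
  normLU L U K = (\tr ((invmx K - S) *m K))%:E.
Proof.
move=> pdK kktK; apply: normLU_tr pdK.1 _ _ => [i|i j ij].
  by rewrite !mxE kkt_diag ?subrr.
by have [_ _ ->] := kkt_offdiag ij kktK; rewrite !mxE.
Qed.

Lemma kkt_normLU_ge K K' : pd_mx K -> kkt_LU S L U K -> symmetric_mx K' ->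
  ((\tr ((invmx K - S) *m K'))%:E <= normLU L U K')%E.
Proof.
move=> pdK kktK sK'; apply: normLU_ge_tr sK' _ _ => [i|i j ij].
  by rewrite !mxE kkt_diag ?subrr.
by have [gL gU _] := kkt_offdiag ij kktK; rewrite !mxE.
Qed.

Lemma kkt_unique K K' : pd_mx K -> kkt_LU S L U K -> pd_mx K' ->
  (objLU S L U K' <= objLU S L U K)%E -> K' = K.
Proof.
move=> pdK kktK pdK' objK'_le.
have trG X : \tr (S *m X) + \tr ((invmx K - S) *m X) = \tr (invmx K *m X).
  by rewrite -mxtraceD -mulmxDl addrC subrK.
have := le_trans (leeD2l _ (kkt_normLU_ge pdK kktK pdK'.1)) objK'_le.
rewrite /objLU (kkt_normLU pdK kktK) -!EFinD lee_fin -!addrA !trG.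
rewrite mulVmx ?pd_mx_unit // mxtrace1 => obj_le.
have [ratio_le ratio_eq] := ln_det_ratio_leif pdK pdK'.
by apply/eqP; rewrite -ratio_eq eq_le ratio_le /=; lra.
Qed.

End Optimality.

Unset Implicit Arguments.
Set Strict Implicit.

Theorem proposition8p2 (R : realType) (d : nat) (S : 'M[R]_d)
  (L U : 'M[\bar R]_d) :
  psd_mx S -> symmetric_mx L -> symmetric_mx U ->
  (forall i j : 'I_d, i != j -> (L i j <= 0)%E /\ (0 <= U i j)%E) ->
  (forall i : 'I_d, L i i = 0%E /\ U i i = 0%E) ->
  forall Khat : 'M[R]_d, is_optimum S L U Khat ->
    kkt_LU S L U Khat /\
    (forall K : 'M[R]_d, pd_mx K -> kkt_LU S L U K -> K = Khat).
Proof.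
(* Positive semidefiniteness of [S] is only needed for the optimum to exist. *)
move=> [sS _] sL sU hLU hLU_diag Khat optKhat; split.
  exact: optimum_kkt.
move=> K pdK kktK; apply/esym/(kkt_unique hLU hLU_diag pdK kktK optKhat.1).
exact: optKhat.2.
Qed.
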